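(* In the ring of symmetric functions (power series in $p_1,p_2,\dots$ over $\mathbb{Q}$), $$p_1\,\partial_{p_1}\Sigma\operatorname{PreLie}+\partial_{p_1}\bigl(\operatorname{Comm}\circ\Sigma\operatorname{PreLie}\bigr)=1.$$
   Context: Symmetric functions are written as (formal power series) in the power sums $p_1,p_2,\dots$ over $\mathbb{Q}$, and $\partial_{p_1}$ is the partial derivative with respect to $p_1$. $\circ$ denotes plethysm: $p_k\circ f$ is obtained from $f$ by replacing every $p_j$ by $p_{jk}$ (rational constants are fixed), and $g\circ f$ is obtained by substituting $p_k\circ f$ for $p_k$ in $g$. The suspension of $f=f(p_1,p_2,\dots)$ is $\Sigma f=-f(-p_1,-p_2,-p_3,\dots)$. $\operatorname{Comm}=\exp\bigl(\sum_{k\ge1}p_k/k\bigr)-1$. $\operatorname{PreLie}$ is the Frobenius characteristic $\sum_{n\ge1}\operatorname{ch}(\mathbb{Q}\mathcal{R}_n)$ of the permutation representations of the symmetric groups $\mathfrak{S}_n$ on the sets $\mathcal{R}_n$ of rooted trees with vertex set $\{1,\dots,n\}$; equivalently, it is the unique symmetric function without constant term satisfying $\operatorname{PreLie}=p_1\,(1+\operatorname{Comm}\circ\operatorname{PreLie})$. *)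

(* Symmetric functions over Q as formal power series in the
   power sums p_1, p_2, ...: a series is its coefficient function on the
   monomials p_lambda = p_{l_1} ... p_{l_r}, where a monomial is encoded by
   the partition lambda = [:: l_1; ...; l_r] (a nonincreasing seq of positive
   naturals).  Values at non-partitions are junk and ignored: two series are
   equal (sym_eq) iff their coefficients agree on all partitions. *)
From mathcomp Require Import all_boot all_order all_algebra.
Set Implicit Arguments. Unset Strict Implicit. Unset Printing Implicit Defensive.
Import Order.TTheory GRing.Theory Num.Theory.
Local Open Scope ring_scope.

Definition partn (l : seq nat) : bool := sorted geq l && all (fun k => 0 < k)%N l.

Definition sym := seq nat -> rat.

Definition sym_eq (f g : sym) : Prop := forall l, partn l -> f l = g l.

Definition sconst (c : rat) : sym := fun l => if l == [::] then c else 0.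
Definition sone : sym := sconst 1.
Definition sp1 : sym := fun l => if l == [:: 1%N] then 1 else 0.
Definition sadd (f g : sym) : sym := fun l => f l + g l.
Definition sopp (f : sym) : sym := fun l => - f l.

Fixpoint bitseqs (n : nat) : seq bitseq :=
  if n is n'.+1 then [seq b :: s | b <- [:: true; false], s <- bitseqs n']
  else [:: [::]].

Definition splits (l : seq nat) : seq (seq nat * seq nat) :=
  undup [seq (mask m l, mask (map negb m) l) | m <- bitseqs (size l)].

(* product: p_mu * p_nu = p_(mu u nu) *)
Definition smul (f g : sym) : sym :=
  fun l => \sum_(pr <- splits l) f pr.1 * g pr.2.

Definition sprod (s : seq sym) : sym := foldr smul sone s.
Definition sexpn (f : sym) (n : nat) : sym := iter n (smul f) sone.

(* exponential of a series without constant term: sum_n f^n / n! *)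
Definition sexp (f : sym) : sym :=
  fun l => \sum_(n < (sumn l).+1) sexpn f n l / ((n`!)%N)%:R.

Definition dp1 (f : sym) : sym :=
  fun l => ((count_mem 1%N l).+1)%:R * f (rcons l 1%N).

(* suspension: Sigma f = - f(-p_1, -p_2, ...) *)
Definition susp (f : sym) : sym := fun l => - ((-1) ^+ size l * f l).

(* p_k o f : replace every p_j by p_{jk}  (k >= 1) *)
Definition pk (k : nat) (f : sym) : sym :=
  fun l => if all (fun i => k %| i)%N l then f (map (fun i => i %/ k)%N l) else 0.

Fixpoint seqs_len (n d : nat) : seq (seq nat) :=
  if n is n'.+1 then [seq i :: s | i <- iota 1 d, s <- seqs_len n' d]
  else [:: [::]].
Definition parts_upto (d : nat) : seq (seq nat) :=
  [seq s <- flatten [seq seqs_len n d | n <- iota 0 d.+1]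
     | partn s && (sumn s <= d)%N].

(* plethysm g o f for f without constant term:
   g o f = sum_nu g_nu * prod_i (p_{nu_i} o f); only |nu| <= deg contributes *)
Definition pleth (g f : sym) : sym :=
  fun l => \sum_(nu <- parts_upto (sumn l)) g nu * sprod [seq pk i f | i <- nu] l.

Definition sumpk_over_k : sym := fun l => if l is [:: k] then (k%:R)^-1 else 0.
Definition Comm : sym := sadd (sexp sumpk_over_k) (sopp sone).

Definition prelie_eq (P : sym) : Prop :=
  P [::] = 0 /\ sym_eq P (smul sp1 (sadd sone (pleth Comm P))).

From HB Require Import structures.
From mathcomp Require Import all_boot all_order all_algebra.
From mathcomp Require Import boolp ring zify.
From Stdlib Require Import ProofIrrelevance.
Set Implicit Arguments. Unset Strict Implicit. Unset Printing Implicit Defensive.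
Import GRing.Theory Num.Theory.

(* Substituting p_i -> -p_i in PreLie = p_1 (1 + Comm o PreLie) shows
   that q := Sigma PreLie satisfies q = p_1 (1 + Comm o (-q)).  Now
   1 + Comm = exp L with L = sum_k p_k / k, and W := L o q is linear in q, so
   this reads q exp(W) = p_1.  Among the p_k o q only p_1 o q = q involves
   p_1, hence d W = d q for d = d/dp_1, and differentiating q exp(W) = p_1
   gives d q exp(W) + q exp(W) d q = 1.  Since p_1 = q exp(W) and
   d (Comm o q) = d exp(W) = exp(W) d q, this is the identity.  The series
   PreLie itself is the limit of the iteration P |-> p_1 (1 + Comm o P),
   which fixes one more degree at each step. *)

(** * Partitions and their splittings *)

Lemma geq_trans : transitive geq.
Proof. exact: rev_trans leq_trans. Qed.

Lemma geq_total : total geq.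
Proof. by move=> m n; rewrite /= orbC leq_total. Qed.

Lemma anti_geq : antisymmetric geq.
Proof. by move=> m n le_mn; apply: anti_leq; rewrite andbC. Qed.

Lemma partn_perm_eq a b : partn a -> partn b -> perm_eq a b -> a = b.
Proof. by move=> /andP[sa _] /andP[sb _]; apply: (sorted_eq geq_trans anti_geq sa sb). Qed.

Lemma partn_sort s : all (fun k => 0 < k)%N s -> partn (sort geq s).
Proof. by move=> s_gt0; rewrite /partn (sort_sorted geq_total) all_sort. Qed.

Lemma partn_subseq a l : partn l -> subseq a l -> partn a.
Proof.
case/andP=> sl l_gt0 al; rewrite /partn (subseq_sorted geq_trans al sl).
by apply/allP=> x /(mem_subseq al); apply: (allP l_gt0).
Qed.

Lemma partn_gt0 l i : partn l -> i \in l -> (0 < i)%N.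
Proof. by case/andP=> _ /allP; apply. Qed.

Lemma partn_behead i l : partn (i :: l) -> partn l.
Proof. by move/partn_subseq; apply; apply: subseq_cons. Qed.

Lemma partn_rcons1 l : partn (rcons l 1%N) = partn l.
Proof.
rewrite /partn all_rcons /=; case: l => //= x l; rewrite rcons_path /=.
apply/idP/idP=> [/andP[/andP[-> _] ->] // | /andP[-> l_gt0]].
by rewrite l_gt0 (allP (l_gt0 : all _ (x :: l)) _ (mem_last x l)).
Qed.

Lemma partn_sumn_eq0 l : partn l -> sumn l = 0%N -> l = [::].
Proof. by case: l => // i l /andP[_ /= /andP[]]; rewrite lt0n => /negPf; case: i. Qed.

Lemma size_le_sumn_partn l : partn l -> (size l <= sumn l)%N.
Proof.
case/andP=> _; elim: l => //= i l IHl /andP[i_gt0 l_gt0].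
by rewrite -add1n leq_add ?IHl.
Qed.

Lemma partn_mem_le_sumn l i : partn l -> i \in l -> (0 < i <= sumn l)%N.
Proof.
move=> pl il; rewrite (partn_gt0 pl il) /=.
by rewrite (perm_sumn (perm_to_rem il)) /= leq_addr.
Qed.

Lemma partn_map_divn k l : (0 < k)%N -> partn l -> all (fun i => k %| i)%N l ->
  partn (map (fun i => i %/ k)%N l).
Proof.
move=> k_gt0 /andP[sl l_gt0] kl; apply/andP; split.
  by apply: (homo_sorted (e := geq)) => // m n; apply: leq_div2r.
apply/allP=> _ /mapP[i il ->]; rewrite divn_gt0 //.
by apply: dvdn_leq; [exact: (allP l_gt0) | exact: (allP kl)].
Qed.

Lemma bitseqsP n m : (m \in bitseqs n) = (size m == n).
Proof.
elim: n m => [|n IHn] [|b m] //=; rewrite ?cats0 mem_cat ?inE //.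
  by apply/negP=> /orP[] /mapP[].
rewrite eqSS -IHn; apply/orP/idP=> [[] /mapP[s sn [_ ->]] // | mn].
by case: b; [left | right]; apply: map_f.
Qed.

Lemma perm_mask_cat (m : bitseq) (l : seq nat) : size m = size l ->
  perm_eq l (mask m l ++ mask (map negb m) l).
Proof.
elim: l m => [|x l IHl] [|[] m] //= [/IHl ml]; first by rewrite perm_cons.
by rewrite -cat1s perm_sym -cat1s perm_catCA perm_cons perm_sym.
Qed.

Lemma splitsP l a b : partn l ->
  ((a, b) \in splits l) = [&& partn a, partn b & perm_eq (a ++ b) l].
Proof.
move=> pl; rewrite mem_undup; apply/mapP/and3P=> [[m] | [pa pb ab_l]].
  rewrite bitseqsP => /eqP/perm_mask_cat lm [-> ->].
  by rewrite !(partn_subseq pl) ?mask_subseq // perm_sym.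
have al : subseq a l.
  have := sorted_subseq_sort geq_total geq_trans (prefix_subseq a b) (andP pa).1.
  by rewrite (perm_sortP geq_total geq_trans anti_geq _ _ ab_l)
             (sorted_sort geq_trans (andP pl).1).
case/subseqP: al => m /eqP; rewrite -bitseqsP => mn ea.
exists m => //; congr pair => //; apply: partn_perm_eq => //.
  by apply: partn_subseq pl _; apply: mask_subseq.
move: mn; rewrite bitseqsP => /eqP/perm_mask_cat; rewrite -ea => lm.
by rewrite -(perm_cat2l a) (perm_trans ab_l).
Qed.

Lemma splits_partn l a b : partn l -> (a, b) \in splits l ->
  [/\ partn a, partn b & (sumn a + sumn b = sumn l)%N].
Proof.
by move=> pl; rewrite splitsP // => /and3P[-> -> /perm_sumn <-]; rewrite sumn_cat.
Qed.

Lemma seqs_lenP n d s :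
  (s \in seqs_len n d) = (size s == n) && all (fun i => 0 < i <= d)%N s.
Proof.
elim: n s => [|n IHn] [|x s] //=; rewrite ?inE //.
  by apply/negP=> /allpairsP[[i t] [_ _]].
apply/allpairsP/idP=> [[[i t] /= [] + + [-> ->]] | /andP[sn /andP[xd sd]]].
  by rewrite mem_iota add1n IHn eqSS => -> /andP[-> ->].
by exists (x, s); rewrite mem_iota add1n IHn -eqSS sn.
Qed.

Lemma seqs_len_uniq n d : uniq (seqs_len n d).
Proof.
elim: n => //= n IHn; apply: allpairs_uniq => //; first exact: iota_uniq.
by move=> [i s] [j t] _ _ [-> ->].
Qed.

Lemma parts_uptoP d s : (s \in parts_upto d) = partn s && (sumn s <= d)%N.
Proof.
rewrite mem_filter; apply/andP/idP=> [[] // | /andP[ps sd]].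
split; first by rewrite ps sd.
apply/flattenP; exists (seqs_len (size s) d).
  by apply/mapP; exists (size s); rewrite // mem_iota ltnS (leq_trans (size_le_sumn_partn ps)).
rewrite seqs_lenP eqxx; apply/allP=> i si.
by case/andP: (partn_mem_le_sumn ps si) => -> /leq_trans->.
Qed.

Lemma parts_upto_uniq d : uniq (parts_upto d).
Proof.
apply: filter_uniq.
elim: (iota 0 d.+1) (iota_uniq 0 d.+1) => //= n ns IHns /andP[n_ns uns].
rewrite cat_uniq seqs_len_uniq IHns // andbT.
apply/hasPn=> s /flattenP[t /mapP[k kns ->]]; rewrite !seqs_lenP.
case/andP=> /eqP sk _; apply/negP=> /andP[/eqP sn _].
by move: n_ns; rewrite -sn sk kns.
Qed.

Local Open Scope ring_scope.

Local Notation ind b := ((b : bool)%:R : rat).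

Lemma big_ind_pick (T : eqType) (s : seq T) (P : pred T) x0 (F : T -> rat) :
  uniq s -> x0 \in s -> {in s, forall x, P x = (x == x0)} ->
  \sum_(x <- s) ind (P x) * F x = F x0.
Proof.
move=> us x0s Px; rewrite (bigD1_seq x0) //= Px // eqxx mul1r big1_seq ?addr0 //.
by move=> x /andP[/negPf x_x0 xs]; rewrite Px // x_x0 mul0r.
Qed.

Lemma big_ind_none (T : eqType) (s : seq T) (P : pred T) (F : T -> rat) :
  {in s, forall x, ~~ P x} -> \sum_(x <- s) ind (P x) * F x = 0.
Proof. by move=> nP; rewrite big1_seq // => x /andP[_ /nP/negPf->]; rewrite mul0r. Qed.

Lemma exchange_big3 (T : Type) (s : seq T) (F : T -> T -> T -> rat) :
  \sum_(x <- s) \sum_(y <- s) \sum_(z <- s) F x y z =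
  \sum_(y <- s) \sum_(z <- s) \sum_(x <- s) F x y z.
Proof. by rewrite exchange_big; apply: eq_bigr => y _; apply: exchange_big. Qed.

Lemma partn_perm_sortE s l : partn l -> perm_eq s l = (l == sort geq s).
Proof.
case/andP=> sl _; apply/idP/eqP=> [s_l | ->]; last by rewrite perm_sym perm_sort.
by rewrite -(sorted_sort geq_trans sl) (perm_sortP geq_total geq_trans anti_geq _ _ s_l).
Qed.

Lemma big_parts_upto_perm N s (F : seq nat -> rat) : all (fun k => 0 < k)%N s ->
  \sum_(l <- parts_upto N) ind (perm_eq s l) * F l
  = if (sumn s <= N)%N then F (sort geq s) else 0.
Proof.
move=> s_gt0; case: ifP => sN.
  apply: big_ind_pick; first exact: parts_upto_uniq.
    by rewrite parts_uptoP partn_sort // (perm_sumn (permEl (perm_sort _ _))).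
  by move=> l; rewrite parts_uptoP => /andP[pl _]; apply: partn_perm_sortE.
apply: big_ind_none => l; rewrite parts_uptoP => /andP[_ lN].
by apply: contraFN sN => /perm_sumn ->.
Qed.

Lemma big_parts_upto_shrink N M (F : seq nat -> rat) : (M <= N)%N ->
  (forall l, partn l -> (M < sumn l)%N -> F l = 0) ->
  \sum_(l <- parts_upto N) F l = \sum_(l <- parts_upto M) F l.
Proof.
move=> MN F0; rewrite (bigID (fun l => sumn l <= M)%N) /= [X in _ + X]big1_seq ?addr0.
  rewrite -big_filter; apply/perm_big/uniq_perm.
  - exact/filter_uniq/parts_upto_uniq.
  - exact: parts_upto_uniq.
  move=> l; rewrite mem_filter !parts_uptoP andbCA andbA.
  by case: leqP => lM /=; rewrite ?andbF // (leq_trans lM MN) andbT.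
by move=> l /andP[]; rewrite -ltnNge parts_uptoP => lM /andP[pl _]; apply: F0.
Qed.

Lemma big_parts_upto_rcons1 N (F : seq nat -> rat) :
  (forall l, 1%N \notin l -> F l = 0) ->
  \sum_(l <- parts_upto N.+1) F l = \sum_(l <- parts_upto N) F (rcons l 1%N).
Proof.
move=> F0; rewrite (bigID (fun l => 1%N \in l)) /= [X in _ + X]big1 ?addr0; last first.
  by move=> l /F0.
rewrite -big_filter -(big_map (fun l => rcons l 1%N) xpredT); apply/perm_big/uniq_perm.
- exact/filter_uniq/parts_upto_uniq.
- by rewrite map_inj_uniq ?parts_upto_uniq // => l l' /rcons_inj[].
move=> l; rewrite mem_filter parts_uptoP; apply/idP/mapP=> [/and3P[l1 pl lN] | [l' + ->]].
  have l_rem := perm_to_rem l1.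
  exists (rem 1%N l).
    rewrite parts_uptoP (partn_subseq pl (rem_subseq _ _)) -ltnS.
    by move: lN; rewrite (perm_sumn l_rem) /= add1n.
  apply: partn_perm_eq; rewrite ?partn_rcons1 ?(partn_subseq pl (rem_subseq _ _)) //.
  by rewrite perm_sym perm_rcons perm_sym.
rewrite parts_uptoP => /andP[pl' l'N].
by rewrite mem_rcons mem_head partn_rcons1 pl' sumn_rcons addn1 ltnS.
Qed.

Lemma smul_parts f g l N M : partn l -> (sumn l <= N)%N -> (sumn l <= M)%N ->
  smul f g l = \sum_(a <- parts_upto N) \sum_(b <- parts_upto M)
                 ind (perm_eq (a ++ b) l) * (f a * g b).
Proof.
move=> pl lN lM; rewrite [RHS](_ : _ = \sum_(p <- [seq (a, b) | a <- parts_upto N,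
    b <- parts_upto M] | perm_eq (p.1 ++ p.2) l) f p.1 * g p.2); last first.
  rewrite [RHS]big_mkcond [RHS]big_allpairs; apply: eq_bigr => a _.
  by apply: eq_bigr => b _ /=; case: ifP; rewrite ?mul1r ?mul0r.
rewrite -big_filter; apply/perm_big/uniq_perm; first exact: undup_uniq.
  apply/filter_uniq/allpairs_uniq; rewrite ?parts_upto_uniq //.
  by move=> [? ?] [? ?] _ _ [-> ->].
move=> [a b]; rewrite splitsP // mem_filter.
apply/and3P/andP=> [[pa pb ab_l] | [ab_l]].
  split=> //; apply/allpairsP; exists (a, b); rewrite !parts_uptoP pa pb.
  by move: lN lM; rewrite -(perm_sumn ab_l) sumn_cat /=; split=> //; lia.
case/allpairsP=> -[a' b'] [/= + + [ea eb]]; rewrite -ea -eb.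
by rewrite !parts_uptoP => /andP[-> _] /andP[-> _].
Qed.

Lemma smulC f g l : partn l -> smul f g l = smul g f l.
Proof.
move=> pl; rewrite !(smul_parts _ _ pl (leqnn _) (leqnn _)) exchange_big /=.
by apply: eq_bigr => b _; apply: eq_bigr => a _; rewrite perm_catC (mulrC (f a)).
Qed.

Lemma big_parts_upto_merge N a b c l : partn l -> (sumn l <= N)%N -> partn a -> partn b ->
  \sum_(ab <- parts_upto N) ind (perm_eq (a ++ b) ab) * ind (perm_eq (ab ++ c) l)
  = ind (perm_eq (a ++ b ++ c) l).
Proof.
move=> pl lN /andP[_ a_gt0] /andP[_ b_gt0].
rewrite big_parts_upto_perm ?all_cat ?a_gt0 //; case: leqP => abN.
  have /permPl-> : perm_eq (sort geq (a ++ b) ++ c) ((a ++ b) ++ c).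
    by rewrite perm_cat2r perm_sort.
  by rewrite catA.
case: (boolP (perm_eq _ l)) => // /perm_sumn abc_l.
by move: lN abN; rewrite -abc_l !sumn_cat; lia.
Qed.

Lemma smul_smul_parts f g h l : partn l ->
  smul (smul f g) h l =
  \sum_(c <- parts_upto (sumn l)) \sum_(a <- parts_upto (sumn l)) \sum_(b <- parts_upto (sumn l))
    ind (perm_eq (a ++ b ++ c) l) * (f a * g b * h c).
Proof.
move=> pl; set N := sumn l; rewrite (smul_parts _ _ pl (leqnn _) (leqnn _)) exchange_big.
apply: eq_bigr => c _; rewrite (eq_big_seq (fun ab => \sum_(a <- parts_upto N)
  \sum_(b <- parts_upto N) ind (perm_eq (a ++ b) ab) * ind (perm_eq (ab ++ c) l) *
                           (f a * g b * h c))); last first.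
  move=> ab; rewrite parts_uptoP => /andP[pab abN].
  rewrite (smul_parts _ _ pab abN abN) mulr_suml mulr_sumr; apply: eq_bigr => a _.
  by rewrite mulr_suml mulr_sumr; apply: eq_bigr => b _; ring.
rewrite exchange_big3; apply: eq_big_seq => a; rewrite parts_uptoP => /andP[pa _].
apply: eq_big_seq => b; rewrite parts_uptoP => /andP[pb _].
by rewrite -(big_parts_upto_merge c pl (leqnn _) pa pb) mulr_suml.
Qed.

Lemma smulA f g h l : partn l -> smul (smul f g) h l = smul f (smul g h) l.
Proof.
move=> pl; rewrite [RHS]smulC // !smul_smul_parts // exchange_big3.
apply: eq_bigr => a _; apply: eq_bigr => b _; apply: eq_bigr => c _.
by rewrite (perm_catC a) -catA; ring.
Qed.

Lemma smul_local f f' g g' l : partn l ->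
  (forall a, partn a -> (sumn a <= sumn l)%N -> f a = f' a) ->
  (forall b, partn b -> (sumn b <= sumn l)%N -> g b = g' b) ->
  smul f g l = smul f' g' l.
Proof.
move=> pl ff' gg'; apply: eq_big_seq => -[a b] /(splits_partn pl) [pa pb ab_l].
by rewrite ff' ?gg' // -ab_l ?leq_addl ?leq_addr.
Qed.

Lemma smulDl f g h l : smul (sadd f g) h l = smul f h l + smul g h l.
Proof. by rewrite -big_split; apply: eq_bigr => p _; rewrite mulrDl. Qed.

Lemma smul_sconst c f l : partn l -> smul (sconst c) f l = c * f l.
Proof.
move=> pl; rewrite (smul_parts _ _ pl (leqnn _) (leqnn _)).
rewrite (eq_bigr (fun a => ind (a == [::]) *
    (c * \sum_(b <- parts_upto (sumn l)) ind (perm_eq b l) * f b))); last first.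
  move=> a _; rewrite mulr_sumr mulr_sumr; apply: eq_bigr => b _.
  by rewrite /sconst; case: eqP => [-> | _]; rewrite /= ?mul1r ?mul0r ?mulr0 // mulrCA.
rewrite (big_ind_pick (x0 := [::])) ?parts_upto_uniq //.
under eq_bigr do rewrite perm_sym.
by case/andP: (pl) => sl l_gt0; rewrite big_parts_upto_perm ?leqnn ?(sorted_sort geq_trans).
Qed.

(** * The ring of symmetric functions *)

(* [symfun] represents a class of [sym_eq] by its unique member vanishing off
   partitions, so that [sym_eq] becomes Leibniz equality. *)
Record symfun := Symfun {
  coef : sym;
  coef_nonpartn : forall l, ~~ partn l -> coef l = 0 }.

Definition restrict (f : sym) : sym := fun l => if partn l then f l else 0.

Lemma restrict_nonpartn f l : ~~ partn l -> restrict f l = 0.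
Proof. by rewrite /restrict => /negPf->. Qed.

Definition Sf (f : sym) : symfun := Symfun (restrict_nonpartn f).

Lemma coef_Sf f l : partn l -> coef (Sf f) l = f l.
Proof. by rewrite /= /restrict => ->. Qed.

Lemma symfun_ext (x y : symfun) : (forall l, partn l -> coef x l = coef y l) -> x = y.
Proof.
case: x y => [f f0] [g g0] /= fg; have ef : f = g.
  by apply: funext => l; case: (boolP (partn l)) => pl; [apply: fg | rewrite f0 ?g0].
by subst g; congr Symfun; apply: proof_irrelevance.
Qed.

Lemma Sf_coef x : Sf (coef x) = x.
Proof. by apply: symfun_ext => l pl; rewrite coef_Sf. Qed.

Lemma eq_Sf f g : sym_eq f g -> Sf f = Sf g.
Proof. by move=> fg; apply: symfun_ext => l pl; rewrite !coef_Sf ?fg. Qed.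

Lemma Sf_sym_eq f g : Sf f = Sf g -> sym_eq f g.
Proof. by move=> fg l pl; rewrite -(coef_Sf f pl) fg coef_Sf. Qed.

HB.instance Definition _ := gen_eqMixin symfun.
HB.instance Definition _ := gen_choiceMixin symfun.

Definition zero_sf := Sf (sconst 0).
Definition add_sf x y := Sf (sadd (coef x) (coef y)).
Definition opp_sf x := Sf (sopp (coef x)).
Definition mul_sf x y := Sf (smul (coef x) (coef y)).

Lemma smul_Sfl f g l : partn l -> smul (coef (Sf f)) g l = smul f g l.
Proof. by move=> pl; apply: smul_local => // a pa _; rewrite coef_Sf. Qed.

Lemma smul_Sfr f g l : partn l -> smul f (coef (Sf g)) l = smul f g l.
Proof. by move=> pl; apply: smul_local => // a pa _; rewrite coef_Sf. Qed.

Lemma add_sfA : associative add_sf.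
Proof. by move=> x y z; apply: symfun_ext => l pl; rewrite !coef_Sf // /sadd !coef_Sf // addrA. Qed.

Lemma add_sfC : commutative add_sf.
Proof. by move=> x y; apply: symfun_ext => l pl; rewrite !coef_Sf // /sadd addrC. Qed.

Lemma add0sf : left_id zero_sf add_sf.
Proof.
move=> x; apply: symfun_ext => l pl; rewrite !coef_Sf // /sadd coef_Sf // /sconst.
by case: ifP; rewrite add0r.
Qed.

Lemma addNsf : left_inverse zero_sf opp_sf add_sf.
Proof.
move=> x; apply: symfun_ext => l pl; rewrite !coef_Sf // /sadd coef_Sf // addNr /sconst.
by case: ifP.
Qed.

HB.instance Definition _ := GRing.isZmodule.Build symfun add_sfA add_sfC add0sf addNsf.

Lemma mul_sfA : associative mul_sf.
Proof.
move=> x y z; apply: symfun_ext => l pl.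
by rewrite !coef_Sf // smul_Sfl // smul_Sfr // smulA.
Qed.

Lemma mul_sfC : commutative mul_sf.
Proof. by move=> x y; apply: symfun_ext => l pl; rewrite !coef_Sf // smulC. Qed.

Lemma mul1sf : left_id (Sf sone) mul_sf.
Proof. by move=> x; apply: symfun_ext => l pl; rewrite !coef_Sf // smul_Sfl // smul_sconst ?mul1r. Qed.

Lemma mul_sfDl : left_distributive mul_sf add_sf.
Proof.
move=> x y z; apply: symfun_ext => l pl.
by rewrite !coef_Sf // smul_Sfl // smulDl /sadd !coef_Sf.
Qed.

Lemma one_sf_neq0 : Sf sone != 0.
Proof. by apply/eqP=> /(congr1 (coef^~ [::])); rewrite !coef_Sf. Qed.

HB.instance Definition _ :=
  GRing.Zmodule_isComNzRing.Build symfun mul_sfA mul_sfC mul1sf mul_sfDl one_sf_neq0.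

Lemma coef0 l : coef 0 l = 0.
Proof.
case: (boolP (partn l)) => pl; last exact: coef_nonpartn.
by rewrite coef_Sf // /sconst; case: ifP.
Qed.

Lemma coefD x y l : coef (x + y) l = coef x l + coef y l.
Proof.
by case: (boolP (partn l)) => pl; [rewrite coef_Sf | rewrite !coef_nonpartn ?addr0].
Qed.

Lemma coefN x l : coef (- x) l = - coef x l.
Proof.
by case: (boolP (partn l)) => pl; [rewrite coef_Sf | rewrite !coef_nonpartn ?oppr0].
Qed.

Lemma coefM x y l : partn l -> coef (x * y) l = smul (coef x) (coef y) l.
Proof. exact: coef_Sf. Qed.

Lemma coef1 l : partn l -> coef 1 l = sone l.
Proof. exact: coef_Sf. Qed.

Lemma coef_sum (I : Type) (r : seq I) (F : I -> symfun) l :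
  coef (\sum_(i <- r) F i) l = \sum_(i <- r) coef (F i) l.
Proof.
elim: r => [|i r IHr]; first by rewrite !big_nil coef0.
by rewrite !big_cons coefD IHr.
Qed.

Lemma SfD f g : Sf (sadd f g) = Sf f + Sf g.
Proof. by apply: symfun_ext => l pl; rewrite coefD !coef_Sf. Qed.

Lemma SfN f : Sf (sopp f) = - Sf f.
Proof. by apply: symfun_ext => l pl; rewrite coefN !coef_Sf. Qed.

Lemma SfM f g : Sf (smul f g) = Sf f * Sf g.
Proof. by apply: symfun_ext => l pl; rewrite coefM // !coef_Sf // smul_Sfl // smul_Sfr. Qed.

Lemma Sf1 : Sf sone = 1.
Proof. by []. Qed.

Definition symC (c : rat) : symfun := Sf (sconst c).

Lemma coef_symC c l : coef (symC c) l = if l == [::] then c else 0.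
Proof.
case: (boolP (partn l)) => pl; first by rewrite coef_Sf.
by rewrite coef_nonpartn //; case: eqP pl => // ->.
Qed.

Lemma coefCM c x l : coef (symC c * x) l = c * coef x l.
Proof.
case: (boolP (partn l)) => pl; last by rewrite !coef_nonpartn ?mulr0.
by rewrite coefM // smul_Sfl // smul_sconst.
Qed.

Lemma symC_is_zmod_morphism : zmod_morphism symC.
Proof.
move=> a b; apply: symfun_ext => l pl; rewrite coefD coefN !coef_symC.
by case: ifP; rewrite ?subr0.
Qed.

HB.instance Definition _ := GRing.isZmodMorphism.Build rat symfun symC symC_is_zmod_morphism.

Lemma symC_is_monoid_morphism : monoid_morphism symC.
Proof.
split=> // a b; apply: symfun_ext => l pl; rewrite coefCM !coef_symC.
by case: ifP; rewrite ?mulr0.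
Qed.

HB.instance Definition _ := GRing.isMonoidMorphism.Build rat symfun symC symC_is_monoid_morphism.

Definition eq_trunc (K : nat) (x y : symfun) : Prop :=
  forall l, partn l -> (sumn l < K)%N -> coef x l = coef y l.

Definition order_ge (K : nat) (x : symfun) : Prop :=
  forall l, partn l -> (sumn l < K)%N -> coef x l = 0.

Lemma eq_trunc_sym K x y : eq_trunc K x y -> eq_trunc K y x.
Proof. by move=> xy l pl lK; rewrite xy. Qed.

Lemma eq_trunc_trans K x y z : eq_trunc K x y -> eq_trunc K y z -> eq_trunc K x z.
Proof. by move=> xy yz l pl lK; rewrite xy ?yz. Qed.

Lemma eq_truncM K x x' y y' :
  eq_trunc K x x' -> eq_trunc K y y' -> eq_trunc K (x * y) (x' * y').
Proof.
move=> xx' yy' l pl lK; rewrite !coefM //.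
by apply: smul_local => // a pa al; [apply: xx' | apply: yy']; rewrite // (leq_ltn_trans al).
Qed.

Lemma eq_trunc_all x y : (forall K, eq_trunc K x y) -> x = y.
Proof. by move=> xy; apply: symfun_ext => l pl; apply: (xy (sumn l).+1). Qed.

Lemma order_geN K x : order_ge K x -> order_ge K (- x).
Proof. by move=> x0 l pl lK; rewrite coefN x0 ?oppr0. Qed.

Lemma order_geM m n x y : order_ge m x -> order_ge n y -> order_ge (m + n) (x * y).
Proof.
move=> x0 y0 l pl lmn; rewrite coefM // /smul big1_seq // => -[a b] /= /(splits_partn pl).
case=> pa pb ab_l; case: (ltnP (sumn a) m) => am; first by rewrite x0 ?mul0r.
by rewrite y0 ?mulr0 //; move: lmn; rewrite -ab_l; lia.
Qed.

Lemma order_geX x n : order_ge 1 x -> order_ge n (x ^+ n).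
Proof.
move=> x0; elim: n => [|n IHn]; first by [].
by rewrite exprS -add1n; apply: order_geM.
Qed.

Lemma order_ge1 x : coef x [::] = 0 -> order_ge 1 x.
Proof. by move=> x0 l pl; rewrite ltnS leqn0 => /eqP/(partn_sumn_eq0 pl)->. Qed.

Lemma coefM_nil x y : coef (x * y) [::] = coef x [::] * coef y [::].
Proof. by rewrite coefM // /smul /splits /= big_seq1. Qed.

Definition ifact (n : nat) : rat := (n`!)%:R^-1.

Definition exp_trunc (M : nat) (x : symfun) : symfun :=
  \sum_(n < M) symC (ifact n) * x ^+ n.

Definition symexp (x : symfun) : symfun := Sf (sexp (coef x)).

Lemma Sf_sexpn f n : Sf (sexpn f n) = Sf f ^+ n.
Proof. by elim: n => //= n IHn; rewrite exprS -IHn -SfM. Qed.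

Lemma sexpE f l : partn l ->
  sexp f l = \sum_(n < (sumn l).+1) ifact n * coef (Sf f ^+ n) l.
Proof. by move=> pl; apply: eq_bigr => n _; rewrite -Sf_sexpn coef_Sf // mulrC. Qed.

Lemma Sf_sexp f : Sf (sexp f) = symexp (Sf f).
Proof. by apply: symfun_ext => l pl; rewrite !coef_Sf // !sexpE // Sf_coef. Qed.

Lemma symexp_trunc M x : order_ge 1 x -> eq_trunc M (symexp x) (exp_trunc M x).
Proof.
move=> x0 l pl lM; rewrite coef_Sf // sexpE // Sf_coef coef_sum.
under [RHS]eq_bigr do rewrite coefCM.
rewrite -!(big_mkord xpredT (fun n => ifact n * coef (x ^+ n) l)).
rewrite [RHS](big_cat_nat _ (n := (sumn l).+1)) //= [X in _ = _ + X]big1_seq ?addr0 //.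
move=> n /andP[_]; rewrite mem_index_iota => /andP[ln _].
by rewrite (order_geX (n := n) x0) ?mulr0.
Qed.

Lemma coef_symexp_nil x : order_ge 1 x -> coef (symexp x) [::] = 1.
Proof.
move=> x0; rewrite coef_Sf // sexpE // big_ord_recl big_ord0 addr0 expr0.
by rewrite /ifact invr1 mul1r.
Qed.

(** * Derivations *)

Lemma count_rcons1 l : count_mem 1%N (rcons l 1%N) = (count_mem 1%N l).+1.
Proof. by rewrite -cats1 count_cat addn1. Qed.

Lemma perm_rcons1 a b l : perm_eq (rcons a 1%N ++ b) (rcons l 1%N) = perm_eq (a ++ b) l.
Proof. by rewrite cat_rcons -cat1s perm_catCA perm_sym perm_rcons perm_cons perm_sym. Qed.

(* Each 1 of [rcons l 1] that lies in [a] contributes one term: this is the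
   [a]-half of the Leibniz rule for d/dp_1. *)
Lemma smul_dp1l_sum f g l : partn l ->
  smul (dp1 f) g l =
  \sum_(a <- parts_upto (sumn l).+1) \sum_(b <- parts_upto (sumn l).+1)
    ind (perm_eq (a ++ b) (rcons l 1%N)) * ((count_mem 1%N a)%:R * (f a * g b)).
Proof.
move=> pl; rewrite (smul_parts _ _ pl (leqnn _) (leqnSn _)) exchange_big [RHS]exchange_big /=.
apply: eq_bigr => b _; rewrite big_parts_upto_rcons1; last first.
  by move=> a /count_memPn->; rewrite !mul0r mulr0.
by apply: eq_bigr => a _; rewrite perm_rcons1 count_rcons1 /dp1; ring.
Qed.

Lemma dp1_smul f g l : partn l ->
  dp1 (smul f g) l = smul (dp1 f) g l + smul f (dp1 g) l.
Proof.
move=> pl; have pl1 : partn (rcons l 1%N) by rewrite partn_rcons1.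
have l1N : (sumn (rcons l 1%N) <= (sumn l).+1)%N by rewrite sumn_rcons addn1.
rewrite /dp1 (smul_parts _ _ pl1 l1N l1N) mulr_sumr.
rewrite (smul_dp1l_sum f g pl) (smulC _ _ pl) (smul_dp1l_sum g f pl).
rewrite [X in _ = _ + X]exchange_big /= -big_split; apply: eq_bigr => a _.
rewrite mulr_sumr -big_split; apply: eq_bigr => b _ /=; rewrite (perm_catC b a).
case: (boolP (perm_eq (a ++ b) (rcons l 1%N))) => [ab_l | _]; last by rewrite /=; ring.
by rewrite -[X in X%:R * _](count_rcons1 l) -(permP ab_l) count_cat natrD /=; ring.
Qed.

Definition deriv1 (x : symfun) : symfun := Sf (dp1 (coef x)).

Lemma coef_deriv1 x l : partn l ->
  coef (deriv1 x) l = (count_mem 1%N l).+1%:R * coef x (rcons l 1%N).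
Proof. exact: coef_Sf. Qed.

Definition euler (x : symfun) : symfun := Sf (fun l => (sumn l)%:R * coef x l).

Lemma coef_euler x l : partn l -> coef (euler x) l = (sumn l)%:R * coef x l.
Proof. exact: coef_Sf. Qed.

(* The last clause (d lowers degrees by at most one) lets d commute with the
   limit defining [symexp]. *)
Definition derivation (d : symfun -> symfun) : Prop :=
  [/\ {morph d : x y / x + y}, forall x y, d (x * y) = d x * y + x * d y,
      forall c, d (symC c) = 0 &
      forall K x y, eq_trunc K.+1 x y -> eq_trunc K (d x) (d y)].

Lemma derivation_deriv1 : derivation deriv1.
Proof.
split=> [x y | x y | c | K x y xy l pl lK].
- by apply: symfun_ext => l pl; rewrite coefD !coef_deriv1 // coefD mulrDr.
- apply: symfun_ext => l pl; rewrite coefD !coefM // coef_deriv1 // coefM ?partn_rcons1 //.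
  by rewrite -/(dp1 _ l) dp1_smul // smul_Sfl // smul_Sfr.
- apply: symfun_ext => l pl; rewrite coef_deriv1 // coef0 coef_symC.
  by case: l {pl} => [|? ?]; rewrite mulr0.
by rewrite !coef_deriv1 // xy ?partn_rcons1 // sumn_rcons addn1 ltnS.
Qed.

Lemma derivation_euler : derivation euler.
Proof.
split=> [x y | x y | c | K x y xy l pl lK].
- by apply: symfun_ext => l pl; rewrite coefD !coef_euler // coefD mulrDr.
- apply: symfun_ext => l pl; rewrite coefD !coefM // coef_euler // coefM //.
  rewrite smul_Sfl // smul_Sfr // /smul mulr_sumr -big_split.
  apply: eq_big_seq => -[a b] /(splits_partn pl) [pa pb <-] /=.
  by rewrite natrD; ring.
- apply: symfun_ext => l pl; rewrite coef_euler // coef0 coef_symC.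
  by case: l {pl} => [|? ?]; rewrite ?mul0r ?mulr0.
by rewrite !coef_euler // xy // ltnW.
Qed.

Section Derivation.

Variable d : symfun -> symfun.
Hypothesis der_d : derivation d.

Lemma derD x y : d (x + y) = d x + d y.
Proof. by case: der_d. Qed.

Lemma derM x y : d (x * y) = d x * y + x * d y.
Proof. by case: der_d. Qed.

Lemma derC c : d (symC c) = 0.
Proof. by case: der_d. Qed.

Lemma der_trunc K x y : eq_trunc K.+1 x y -> eq_trunc K (d x) (d y).
Proof. by case: der_d => _ _ _; apply. Qed.

Lemma der1 : d 1 = 0.
Proof. by rewrite -(rmorph1 symC) derC. Qed.

Lemma der0 : d 0 = 0.
Proof. by rewrite -(rmorph0 symC) derC. Qed.

Lemma derN x : d (- x) = - d x.
Proof. by apply/eqP; rewrite -addr_eq0 -derD addNr der0. Qed.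

Lemma der_sum (I : Type) (r : seq I) (F : I -> symfun) :
  d (\sum_(i <- r) F i) = \sum_(i <- r) d (F i).
Proof.
elim: r => [|i r IHr]; first by rewrite !big_nil der0.
by rewrite !big_cons derD IHr.
Qed.

Lemma derCM c x : d (symC c * x) = symC c * d x.
Proof. by rewrite derM derC mul0r add0r. Qed.

Lemma derXS x n : d (x ^+ n.+1) = n.+1%:R * x ^+ n * d x.
Proof.
elim: n => [|n IHn]; first by rewrite expr1 expr0 mulr1 mul1r.
by rewrite exprS derM IHn [n.+2%:R]mulrSr exprS; ring.
Qed.

Lemma der_exp_trunc M x : d (exp_trunc M.+1 x) = exp_trunc M x * d x.
Proof.
rewrite der_sum big_ord_recl /= derCM expr0 -(rmorph1 symC) derC mulr0 add0r.
rewrite mulr_suml; apply: eq_bigr => i _; rewrite derCM derXS /bump /= add1n.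
have -> : ifact i = ifact i.+1 * i.+1%:R.
  by rewrite /ifact factS natrM invfM mulrAC mulVf ?mul1r ?pnatr_eq0.
by rewrite rmorphM rmorph_nat; ring.
Qed.

Lemma der_symexp x : order_ge 1 x -> d (symexp x) = symexp x * d x.
Proof.
move=> x0; apply: eq_trunc_all => K.
apply: (eq_trunc_trans (der_trunc (symexp_trunc (M := K.+1) x0))).
rewrite der_exp_trunc; apply: eq_truncM => //.
exact/eq_trunc_sym/symexp_trunc.
Qed.

End Derivation.

Lemma euler_eq0 u : euler u = 0 -> u = symC (coef u [::]).
Proof.
move=> u0; apply: symfun_ext => l pl; rewrite coef_symC; case: eqP => [-> // | /eqP l_nil].
have /eqP := congr1 (coef^~ l) u0; rewrite coef_euler // coef0 mulf_eq0 pnatr_eq0.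
by case/orP=> /eqP // /(partn_sumn_eq0 pl)/eqP; rewrite (negPf l_nil).
Qed.

Lemma symexpN x : order_ge 1 x -> symexp (- x) * symexp x = 1.
Proof.
move=> x0; have nx0 := order_geN x0.
rewrite (euler_eq0 (u := symexp (- x) * symexp x)).
  by rewrite coefM_nil !coef_symexp_nil // mulr1 rmorph1.
rewrite (derM derivation_euler) !(der_symexp derivation_euler) //.
by rewrite (derN derivation_euler); ring.
Qed.

(** * Adams operations and plethysm *)

Definition adams (k : nat) (x : symfun) : symfun := Sf (pk k (coef x)).

Lemma coef_adams k x l : partn l -> coef (adams k x) l =
  if all (fun i => k %| i)%N l then coef x (map (fun i => i %/ k)%N l) else 0.
Proof. exact: coef_Sf. Qed.

Lemma Sf_pk k f : (0 < k)%N -> Sf (pk k f) = adams k (Sf f).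
Proof.
move=> k_gt0; apply: symfun_ext => l pl; rewrite coef_adams // coef_Sf // /pk.
by case: ifP => // kl; rewrite coef_Sf // partn_map_divn.
Qed.

Lemma adams1 x : adams 1 x = x.
Proof.
apply: symfun_ext => l pl; rewrite coef_adams // (eq_all (a2 := predT)) ?all_predT //.
  by rewrite map_id_in // => i _; rewrite divn1.
by move=> i; rewrite dvd1n.
Qed.

Lemma adamsN k x : adams k (- x) = - adams k x.
Proof.
by apply: symfun_ext => l pl; rewrite coefN !coef_adams //; case: ifP; rewrite ?coefN ?oppr0.
Qed.

Lemma order_ge_adams k x : (0 < k)%N -> order_ge 1 x -> order_ge k (adams k x).
Proof.
move=> k_gt0 x0 l pl lk; rewrite coef_adams //; case: ifP => // kl.
case: l pl lk kl => [|i l] pl lk; first by rewrite x0.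
case/andP=> /(dvdn_leq (partn_gt0 pl (mem_head _ _))) ki _.
by move: lk; rewrite /=; lia.
Qed.

Lemma adams_trunc K k x y : (0 < k)%N -> eq_trunc K x y -> eq_trunc K (adams k x) (adams k y).
Proof.
move=> k_gt0 xy l pl lK; rewrite !coef_adams //; case: ifP => // kl.
apply: xy; first exact: partn_map_divn.
apply: leq_ltn_trans lK; elim: l {pl kl} => //= i l IHl.
by rewrite leq_add ?leq_div.
Qed.

Definition negp (x : symfun) : symfun := Sf (fun l => (-1) ^+ size l * coef x l).

Lemma coef_negp x l : partn l -> coef (negp x) l = (-1) ^+ size l * coef x l.
Proof. exact: coef_Sf. Qed.

Lemma negp_is_zmod_morphism : zmod_morphism negp.
Proof.
by move=> x y; apply: symfun_ext => l pl; rewrite coefD coefN !coef_negp // coefD coefN; ring.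
Qed.

HB.instance Definition _ := GRing.isZmodMorphism.Build symfun symfun negp negp_is_zmod_morphism.

Lemma negp_is_monoid_morphism : monoid_morphism negp.
Proof.
split=> [|x y]; apply: symfun_ext => l pl.
  by rewrite coef_negp // coef1 // /sone /sconst; case: eqP => [-> | _]; rewrite ?mulr0.
rewrite coef_negp // !coefM // smul_Sfl // smul_Sfr // /smul mulr_sumr.
apply: eq_big_seq => -[a b]; rewrite splitsP // => /and3P[pa pb /perm_size <-] /=.
by rewrite size_cat exprD; ring.
Qed.

HB.instance Definition _ := GRing.isMonoidMorphism.Build symfun symfun negp negp_is_monoid_morphism.

Lemma negp_adams k x : (0 < k)%N -> negp (adams k x) = adams k (negp x).
Proof.
move=> k_gt0; apply: symfun_ext => l pl; rewrite coef_negp // !coef_adams //.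
by case: ifP => kl; rewrite ?mulr0 // coef_negp ?partn_map_divn // size_map.
Qed.

Definition adams_prod (x : symfun) (nu : seq nat) : symfun := \prod_(i <- nu) adams i x.

Definition plethysm (g x : symfun) : symfun := Sf (pleth (coef g) (coef x)).

Lemma Sf_sprod s : Sf (sprod s) = \prod_(f <- s) Sf f.
Proof. by elim: s => [|f s IHs] /=; rewrite ?big_nil ?big_cons ?SfM ?IHs. Qed.

Lemma coef_plethysm g x l : partn l ->
  coef (plethysm g x) l = \sum_(nu <- parts_upto (sumn l)) coef g nu * coef (adams_prod x nu) l.
Proof.
move=> pl; rewrite coef_Sf //; apply: eq_bigr => nu _.
by rewrite -(coef_Sf _ pl) Sf_sprod big_map.
Qed.

Lemma Sf_pleth g f : Sf (pleth g f) = plethysm (Sf g) (Sf f).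
Proof.
apply: symfun_ext => l pl; rewrite coef_plethysm // coef_Sf //; apply: eq_big_seq => nu.
rewrite parts_uptoP => /andP[pnu _]; rewrite coef_Sf // -(coef_Sf _ pl) Sf_sprod big_map.
by congr (_ * coef _ l); apply: eq_big_seq => i nu_i; rewrite Sf_pk ?(partn_gt0 pnu).
Qed.

Lemma order_ge_adams_prod x nu : order_ge 1 x -> partn nu -> order_ge (sumn nu) (adams_prod x nu).
Proof.
move=> x0; elim: nu => [|i nu IHnu] pnu; first by move=> l.
rewrite /adams_prod big_cons; apply: order_geM; last exact/IHnu/(partn_behead pnu).
exact/order_ge_adams/x0/(partn_gt0 pnu (mem_head _ _)).
Qed.

Lemma coef_plethysm_upto N g x l : order_ge 1 x -> partn l -> (sumn l <= N)%N ->
  coef (plethysm g x) l = coef (\sum_(nu <- parts_upto N) symC (coef g nu) * adams_prod x nu) l.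
Proof.
move=> x0 pl lN; rewrite coef_plethysm // coef_sum (big_parts_upto_shrink lN).
  by apply: eq_bigr => nu _; rewrite coefCM.
by move=> nu pnu lnu; rewrite coefCM (order_ge_adams_prod x0 pnu) ?mulr0.
Qed.

Lemma plethysmM g h x : order_ge 1 x -> plethysm (g * h) x = plethysm g x * plethysm h x.
Proof.
move=> x0; apply: symfun_ext => l pl; set N := sumn l.
have l_upto g' := coef_plethysm_upto g' x0 pl (leqnn N).
have eq_upto g' : eq_trunc N.+1 (plethysm g' x)
    (\sum_(nu <- parts_upto N) symC (coef g' nu) * adams_prod x nu).
  by move=> l' pl' l'N; apply: coef_plethysm_upto.
rewrite (eq_truncM (eq_upto g) (eq_upto h) pl (ltnSn _)) l_upto big_distrlr /=.
rewrite !coef_sum (eq_big_seq (fun nu => \sum_(a <- parts_upto N) \sum_(b <- parts_upto N)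
    ind (perm_eq (a ++ b) nu) * (coef g a * coef h b * coef (adams_prod x nu) l))); last first.
  move=> nu; rewrite parts_uptoP => /andP[pnu nuN].
  rewrite (coefCM (coef (g * h) nu)) coefM // (smul_parts _ _ pnu nuN nuN) mulr_suml.
  by apply: eq_bigr => a _; rewrite mulr_suml; apply: eq_bigr => b _; ring.
rewrite exchange_big3; apply: eq_big_seq => a; rewrite parts_uptoP => /andP[pa _].
rewrite coef_sum; apply: eq_big_seq => b; rewrite parts_uptoP => /andP[pb _].
rewrite big_parts_upto_perm ?all_cat ?(andP pa).2 ?(andP pb).2 //.
rewrite mulrACA -rmorphM coefCM; case: leqP => abN.
  by rewrite /adams_prod -big_cat (perm_big _ (permEl (perm_sort geq _))).
by rewrite (order_geM (order_ge_adams_prod x0 pa) (order_ge_adams_prod x0 pb)) ?mulr0 // -sumn_cat.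
Qed.

Lemma plethysmD g h x : plethysm (g + h) x = plethysm g x + plethysm h x.
Proof.
apply: symfun_ext => l pl; rewrite coefD !coef_plethysm // -big_split.
by apply: eq_bigr => nu _; rewrite coefD mulrDl.
Qed.

Lemma plethysm_sum (I : Type) (r : seq I) (F : I -> symfun) x :
  plethysm (\sum_(i <- r) F i) x = \sum_(i <- r) plethysm (F i) x.
Proof.
elim: r => [|i r IHr]; last by rewrite !big_cons plethysmD IHr.
apply: symfun_ext => l pl; rewrite !big_nil coef_plethysm // coef0 big1 // => nu _.
by rewrite coef0 mul0r.
Qed.

Lemma plethysmC c x : plethysm (symC c) x = symC c.
Proof.
apply: symfun_ext => l pl; rewrite coef_plethysm //.
rewrite (eq_bigr (fun nu => ind (nu == [::]) * (c * coef (adams_prod x nu) l))); last first.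
  by move=> nu _; rewrite coef_symC; case: eqP; rewrite ?mul1r ?mul0r.
rewrite (big_ind_pick (x0 := [::])) ?parts_upto_uniq //.
by rewrite /adams_prod big_nil coef1 // coef_symC /sone /sconst; case: eqP; rewrite ?mulr1 ?mulr0.
Qed.

Lemma plethysmX g x n : order_ge 1 x -> plethysm (g ^+ n) x = plethysm g x ^+ n.
Proof.
move=> x0; elim: n => [|n IHn]; first by rewrite !expr0 -(rmorph1 symC) plethysmC.
by rewrite !exprS plethysmM // IHn.
Qed.

Lemma plethysm_exp_trunc M g x : order_ge 1 x ->
  plethysm (exp_trunc M g) x = exp_trunc M (plethysm g x).
Proof.
move=> x0; rewrite plethysm_sum; apply: eq_bigr => n _.
by rewrite plethysmM // plethysmC plethysmX.
Qed.

Lemma plethysm_truncl K g g' x : eq_trunc K g g' -> eq_trunc K (plethysm g x) (plethysm g' x).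
Proof.
move=> gg' l pl lK; rewrite !coef_plethysm //; apply: eq_big_seq => nu.
by rewrite parts_uptoP => /andP[pnu nul]; rewrite gg' // (leq_ltn_trans nul).
Qed.

Lemma adams_prod_trunc K x y nu : partn nu -> eq_trunc K x y ->
  eq_trunc K (adams_prod x nu) (adams_prod y nu).
Proof.
move=> + xy; elim: nu => [|i nu IHnu] pnu; first by rewrite /adams_prod !big_nil.
rewrite /adams_prod !big_cons; apply: eq_truncM; last exact/IHnu/(partn_behead pnu).
exact/adams_trunc/xy/(partn_gt0 pnu (mem_head _ _)).
Qed.

Lemma plethysm_truncr K g x y : eq_trunc K x y -> eq_trunc K (plethysm g x) (plethysm g y).
Proof.
move=> xy l pl lK; rewrite !coef_plethysm //; apply: eq_big_seq => nu.
by rewrite parts_uptoP => /andP[pnu _]; rewrite (adams_prod_trunc pnu xy).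
Qed.

Lemma order_ge1_plethysm g x : order_ge 1 g -> order_ge 1 (plethysm g x).
Proof.
move=> g0 l pl lK; rewrite coef_plethysm // big1_seq // => nu /andP[_].
by rewrite parts_uptoP => /andP[pnu nul]; rewrite g0 ?mul0r // (leq_ltn_trans nul).
Qed.

Lemma plethysm_symexp g x : order_ge 1 g -> order_ge 1 x ->
  plethysm (symexp g) x = symexp (plethysm g x).
Proof.
move=> g0 x0; apply: eq_trunc_all => K.
apply: (eq_trunc_trans (plethysm_truncl _ (symexp_trunc (M := K) g0))).
rewrite plethysm_exp_trunc //; apply/eq_trunc_sym/symexp_trunc.
exact: order_ge1_plethysm.
Qed.

Lemma negp_plethysm g x : negp (plethysm g x) = plethysm g (negp x).
Proof.
apply: symfun_ext => l pl; rewrite coef_negp // !coef_plethysm // mulr_sumr.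
apply: eq_big_seq => nu; rewrite parts_uptoP => /andP[pnu _].
rewrite /adams_prod -(eq_big_seq _ (fun i nu_i => negp_adams x (partn_gt0 pnu nu_i))).
by rewrite -rmorph_prod coef_negp //; ring.
Qed.

Definition sumpk : symfun := Sf sumpk_over_k.

Definition p1 : symfun := Sf sp1.

Lemma order_ge1_sumpk : order_ge 1 sumpk.
Proof. by apply: order_ge1; rewrite coef_Sf. Qed.

Lemma coef_plethysm_sumpk x l : partn l -> coef (plethysm sumpk x) l =
  \sum_(nu <- parts_upto (sumn l)) if nu is [:: k] then k%:R^-1 * coef (adams k x) l else 0.
Proof.
move=> pl; rewrite coef_plethysm //; apply: eq_big_seq => nu.
rewrite parts_uptoP => /andP[pnu _]; rewrite coef_Sf //.
by case: nu pnu => [|k [|k' nu]] pnu; rewrite ?mul0r // /adams_prod big_seq1.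
Qed.

Lemma plethysm_sumpkN x : plethysm sumpk (- x) = - plethysm sumpk x.
Proof.
apply: symfun_ext => l pl; rewrite coefN !coef_plethysm_sumpk // -sumrN.
by apply: eq_bigr => -[|k [|? ?]]; rewrite ?oppr0 // adamsN coefN mulrN.
Qed.

(* Only the term p_1 o x = x of sum_k (p_k o x) / k involves p_1. *)
Lemma deriv1_plethysm_sumpk x : deriv1 (plethysm sumpk x) = deriv1 x.
Proof.
apply: symfun_ext => l pl; rewrite !coef_deriv1 //; congr (_ * _).
have pl1 : partn (rcons l 1%N) by rewrite partn_rcons1.
rewrite coef_plethysm_sumpk // (bigD1_seq [:: 1%N]) ?parts_upto_uniq //=; last first.
  by rewrite parts_uptoP sumn_rcons addn1.
rewrite invr1 mul1r -[restrict _ _]/(coef (adams 1 x) (rcons l 1%N)) adams1 big1 ?addr0 //.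
move=> -[|k [|? ?]] //= k1; rewrite /restrict pl1 /pk all_rcons /= dvdn1.
have k_neq1 : k != 1%N by apply: contraNneq k1 => ->.
by rewrite (negPf k_neq1) mulr0.
Qed.

Lemma Sf_Comm : Sf Comm = symexp sumpk - 1.
Proof. by rewrite SfD SfN Sf_sexp. Qed.

Lemma plethysm_Comm x : order_ge 1 x -> 1 + plethysm (Sf Comm) x = symexp (plethysm sumpk x).
Proof.
move=> x0; rewrite Sf_Comm plethysmD -(rmorphN1 symC) plethysmC rmorphN1.
by rewrite (plethysm_symexp order_ge1_sumpk x0) addrC subrK.
Qed.

Lemma deriv1_p1 : deriv1 p1 = 1.
Proof.
apply: symfun_ext => l pl; rewrite coef_deriv1 // coef_Sf ?partn_rcons1 // coef1 // /sp1 /sone /sconst.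
case: l pl => [|i l] _ /=; first by rewrite mulr1.
by rewrite (_ : _ :: _ == _ = false) ?mulr0 //; apply/eqP=> /(congr1 size); rewrite /= size_rcons.
Qed.

Lemma negp_p1 : negp p1 = - p1.
Proof.
apply: symfun_ext => l pl; rewrite coef_negp // coefN coef_Sf // /sp1.
by case: eqP => [-> | _]; rewrite ?mulr0 ?oppr0 // expr1 mulN1r.
Qed.

Lemma Sf_dp1 f : Sf (dp1 f) = deriv1 (Sf f).
Proof. by apply: symfun_ext => l pl; rewrite coef_deriv1 // !coef_Sf ?partn_rcons1. Qed.

Lemma Sf_susp f : Sf (susp f) = - negp (Sf f).
Proof. by apply: symfun_ext => l pl; rewrite coefN coef_negp // !coef_Sf. Qed.

Lemma deriv1_identity q : order_ge 1 q -> q * symexp (plethysm sumpk q) = p1 ->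
  p1 * deriv1 q + deriv1 (plethysm (Sf Comm) q) = 1.
Proof.
set W := plethysm sumpk q => q0 qEW.
have W0 : order_ge 1 W by apply/order_ge1_plethysm/order_ge1_sumpk.
have deriv1E : deriv1 (symexp W) = symexp W * deriv1 q.
  by rewrite (der_symexp derivation_deriv1) // deriv1_plethysm_sumpk.
have deriv1Comm : deriv1 (plethysm (Sf Comm) q) = symexp W * deriv1 q.
  rewrite -(addKr 1 (plethysm _ q)) plethysm_Comm // (derD derivation_deriv1).
  by rewrite (derN derivation_deriv1) (der1 derivation_deriv1) oppr0 add0r.
have <- : deriv1 (q * symexp W) = 1 by rewrite qEW deriv1_p1.
by rewrite deriv1Comm -qEW (derM derivation_deriv1) deriv1E; ring.
Qed.

Lemma order_ge1_susp_prelie P : prelie_eq P -> order_ge 1 (Sf (susp P)).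
Proof. by case=> P0 _; apply: order_ge1; rewrite coef_Sf // /susp P0 mulr0 oppr0. Qed.

Lemma prelie_fixpointE P : prelie_eq P -> Sf P = p1 * (1 + plethysm (Sf Comm) (Sf P)).
Proof. by case=> _ HP; rewrite {1}(eq_Sf HP) SfM SfD Sf1 Sf_pleth. Qed.

Lemma susp_prelie_exp P : prelie_eq P ->
  Sf (susp P) * symexp (plethysm sumpk (Sf (susp P))) = p1.
Proof.
move=> HP; set q := Sf (susp P); have q0 : order_ge 1 q := order_ge1_susp_prelie HP.
have qE : q = p1 * symexp (- plethysm sumpk q).
  rewrite -plethysm_sumpkN -(plethysm_Comm (order_geN q0)).
  rewrite {1}/q Sf_susp (prelie_fixpointE HP) rmorphM /= negp_p1 rmorphD rmorph1 /= negp_plethysm.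
  by rewrite -[negp _]opprK -Sf_susp -/q mulNr opprK.
rewrite {1}qE -mulrA symexpN ?mulr1 //.
exact/order_ge1_plethysm/order_ge1_sumpk.
Qed.

Lemma susp_prelie_identity P : prelie_eq P ->
  sym_eq (sadd (smul sp1 (dp1 (susp P))) (dp1 (pleth Comm (susp P)))) sone.
Proof.
move=> HP; apply: Sf_sym_eq; rewrite SfD SfM !Sf_dp1 Sf_pleth Sf1.
exact: deriv1_identity (order_ge1_susp_prelie HP) (susp_prelie_exp HP).
Qed.

(** * Existence of PreLie *)

Definition prelie_step (P : sym) : sym := smul sp1 (sadd sone (pleth Comm P)).

Lemma prelie_step_local (P P' : sym) m :
  (forall a, partn a -> (sumn a < m)%N -> P a = P' a) ->
  forall l, partn l -> (sumn l <= m)%N -> prelie_step P l = prelie_step P' l.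
Proof.
move=> PP' l pl lm; apply: eq_big_seq => -[a b] /(splits_partn pl) [pa pb ab_l].
rewrite -[(a, b).1]/a -[(a, b).2]/b /sp1; case: eqP => [a1 | _]; last by rewrite !mul0r.
congr (_ * (_ + _)).
rewrite -(coef_Sf (pleth Comm P) pb) -(coef_Sf (pleth Comm P') pb) !Sf_pleth.
apply: (plethysm_truncr (K := m)) => //; first by move=> u pu um; rewrite !coef_Sf // PP'.
by move: ab_l lm; rewrite a1 /=; lia.
Qed.

Timeout 20 Definition prelie_approx (n : nat) : sym := iter n prelie_step (fun _ => 0).

Lemma prelie_approxS n l : partn l -> (sumn l < n)%N ->
  prelie_approx n.+1 l = prelie_approx n l.
Proof.
elim: n l => // n IHn l pl ln.
by apply: (prelie_step_local (m := n)) => // a pa an; apply: IHn.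
Qed.

Lemma prelie_approx_stable n k l : (n <= k)%N -> partn l -> (sumn l < n)%N ->
  prelie_approx k l = prelie_approx n l.
Proof.
move=> /subnKC <-; elim: (k - n)%N => [|j IHj] pl ln; first by rewrite addn0.
by rewrite addnS prelie_approxS ?IHj // (leq_trans ln) ?leq_addr.
Qed.

(* The coefficients of degree below [n] stabilise after [n] iterations. *)
Definition prelie : sym := fun l => prelie_approx (sumn l).+1 l.

Lemma prelie_eq_prelie : prelie_eq prelie.
Proof.
split; first by rewrite /prelie /= /prelie_step /smul /splits /= big_seq1 /sp1 mul0r.
move=> l pl; apply: (@prelie_step_local (prelie_approx (sumn l)) _ (sumn l)) => // a pa al.
by rewrite /prelie (prelie_approx_stable (n := (sumn a).+1) (k := sumn l)) ?ltnSn.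
Qed.

Theorem mainTheorem3 :
  (exists P : sym, prelie_eq P) /\
  forall P : sym, prelie_eq P ->
    sym_eq (sadd (smul sp1 (dp1 (susp P))) (dp1 (pleth Comm (susp P)))) sone.
Proof.
split; first by exists prelie; exact: prelie_eq_prelie.
exact: susp_prelie_identity.
Qed.
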